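(* Let $n$ be the number of processes, let $m$ be a positive integer, and let $k$ be a real number with $k\ge\sqrt{2n}$. Algorithm A (described in the context), with $\mathit{logNumIncrems}$ implemented as a $\lceil\log_2 m\rceil$-bounded max-register, is a wait-free linearizable implementation of a $k$-multiplicative-accurate $m$-bounded counter. When the max-register is implemented from read-write registers by an $h$-bounded max-register algorithm whose MaxRead and MaxWrite each take $O(\log h)$ steps, every Read and every Increment takes $O(\log\log m)$ steps.
   Context: Model: $n$ asynchronous, crash-prone processes communicate through linearizable shared objects. An implementation is wait-free if every process that takes infinitely many steps completes infinitely many operations. An implementation is linearizable if, in every execution, the complete operations and some of the incomplete operations can be totally ordered so that (a) the order respects the real-time order of non-overlapping operations and (b) the sequence satisfies the object's sequential specification. A max-register supports MaxWrite$(v)$ and MaxRead. A MaxRead returns the largest value among all preceding MaxWrites, or the initial value if there was none. It is $h$-bounded if no MaxWrite argument exceeds $h$. A $k$-multiplicative-accurate counter supports Increment and Read. In its sequential specification, each Read returns a value $x$ with $v/k\le x\le kv$, where $v$ is the number of preceding Increments. It is $m$-bounded if attention is restricted to executions with at most $m$ Increments. Algorithm A has one shared max-register $\mathit{logNumIncrems}$ with initial value $-1$. Each process has local variables $\mathit{lcounter}=0$, $\mathit{threshold}=1$ and $\mathit{nextVal}=0$. Increment(): - $\mathit{lcounter}\gets\mathit{lcounter}+1$. - If $\mathit{lcounter}=\mathit{threshold}$, then: - $\mathit{logNumIncrems}$.MaxWrite$(\mathit{nextVal})$; - $\mathit{nextVal}\gets \mathit{nextVal}+1$; - $\mathit{lcounter}\gets0$;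 - if $\mathit{nextVal}\ge2$, then $\mathit{threshold}\gets2\cdot\mathit{threshold}$. Read(): - $r\gets\mathit{logNumIncrems}$.MaxRead(). - If $r\ge0$, return $k\cdot2^r$; otherwise return $0$. *)

From Stdlib Require Import Reals List Arith ZArith.
Import ListNotations.

(** * Model of Algorithm A running on n asynchronous crash-prone processes,
    with logNumIncrems an atomic (linearizable) max-register. *)

Inductive OpKind := OInc | ORead.

Inductive Resp := RInc | RRead (x : R).

Definition kind_of (r : Resp) : OpKind :=
  match r with RInc => OInc | RRead _ => ORead end.

Inductive PC :=
| Idle
| IncWrite (v : nat)   (* inside Increment, about to do logNumIncrems.MaxWrite(v) *)
| IncRet
| ReadRead             (* inside Read, about to do logNumIncrems.MaxRead() *)
| ReadRet (x : R).

Record LState := mkL { lcounter : nat; threshold : nat; nextVal : nat; pc : PC }.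

Definition init_local : LState := mkL 0 1 0 Idle.

(** Global configuration: local states of processes and the max-register
    logNumIncrems (initial value -1). *)
Record Config := mkC { loc : nat -> LState; reg : Z }.

Definition init_config : Config := mkC (fun _ => init_local) (-1)%Z.

(** Events: invocations/responses of the counter operations, and the
    accesses to the shared max-register. Every step emits exactly one event. *)
Inductive Event :=
| EInv (p : nat) (o : OpKind)
| ERes (p : nat) (r : Resp)
| EMaxWrite (p : nat) (v : nat)
| EMaxRead (p : nat) (r : Z).

Definition upd (f : nat -> LState) (p : nat) (s : LState) : nat -> LState :=
  fun q => if Nat.eqb q p then s else f q.

(** One step of process p.  The OpKind argument is the operation that the
    environment asks p to invoke; it is only used when p is idle. *)
Definition step (k : R) (c : Config) (a : nat * OpKind) : Config * Event :=
  let (p, o) := a in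
  let s := loc c p in
  let setp s' := mkC (upd (loc c) p s') (reg c) in
  match pc s with
  | Idle =>
      match o with
      | OInc =>
          let lc := S (lcounter s) in
          if Nat.eqb lc (threshold s)
          then (setp (mkL lc (threshold s) (nextVal s) (IncWrite (nextVal s))), EInv p OInc)
          else (setp (mkL lc (threshold s) (nextVal s) IncRet), EInv p OInc)
      | ORead =>
          (setp (mkL (lcounter s) (threshold s) (nextVal s) ReadRead), EInv p ORead)
      end
  | IncWrite v =>
      let nv := S (nextVal s) in
      let thr := if Nat.leb 2 nv then 2 * threshold s else threshold s in
      (mkC (upd (loc c) p (mkL 0 thr nv IncRet)) (Z.max (reg c) (Z.of_nat v)),
       EMaxWrite p v)
  | IncRet =>
      (setp (mkL (lcounter s) (threshold s) (nextVal s) Idle), ERes p RInc)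
  | ReadRead =>
      let r := reg c in
      let x := if Z.leb 0 r then (k * 2 ^ Z.to_nat r)%R else 0%R in
      (setp (mkL (lcounter s) (threshold s) (nextVal s) (ReadRet x)), EMaxRead p r)
  | ReadRet x =>
      (setp (mkL (lcounter s) (threshold s) (nextVal s) Idle), ERes p (RRead x))
  end.

Fixpoint run_from (k : R) (c : Config) (sched : list (nat * OpKind))
  : Config * list Event :=
  match sched with
  | [] => (c, [])
  | a :: sch =>
      let (c', e) := step k c a in
      let (cf, es) := run_from k c' sch in (cf, e :: es)
  end.

Definition events (k : R) (sched : list (nat * OpKind)) : list Event :=
  snd (run_from k init_config sched).

(** A schedule only schedules the n processes 0, ..., n-1.  Crashes are
    modelled by processes that stop being scheduled. *)
Definition valid_sched (n : nat) (sched : list (nat * OpKind)) : Prop :=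
  forall a, In a sched -> fst a < n.

Definition is_inc_inv (e : Event) : bool :=
  match e with EInv _ OInc => true | _ => false end.

Definition num_incs (es : list Event) : nat := length (filter is_inc_inv es).

Definition hl_of (p : nat) (e : Event) : bool :=
  match e with
  | EInv q _ | ERes q _ => Nat.eqb q p
  | _ => false
  end.

(** The operation invoked at position i of es is complete, with response r
    at position j. *)
Definition response (es : list Event) (i j : nat) (r : Resp) : Prop :=
  exists p o, nth_error es i = Some (EInv p o) /\ i < j /\
    nth_error es j = Some (ERes p r) /\
    forall l e, i < l -> l < j -> nth_error es l = Some e -> hl_of p e = false.

(** Sequential specification of a k-multiplicative-accurate counter:
    v is the number of preceding Increments. *)
Fixpoint legal_from (k : R) (v : nat) (s : list Resp) : Prop :=
  match s with
  | [] => True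
  | RInc :: s' => legal_from k (S v) s'
  | RRead x :: s' => (INR v / k <= x <= k * INR v)%R /\ legal_from k v s'
  end.

Definition precedes {A} (L : list A) (x y : A) : Prop :=
  exists a b, nth_error L a = Some x /\ nth_error L b = Some y /\ a < b.

(** An operation
    is identified by the position of its invocation in es.  L is the
    linearization: it contains every complete operation (with its actual
    response) and possibly some pending operations (with a response chosen
    for them), totally ordered so that real-time order is respected and the
    sequence is legal. *)
Definition linearizable (k : R) (es : list Event) : Prop :=
  exists L : list (nat * Resp),
    NoDup (map fst L) /\
    (forall i r, In (i, r) L ->
       exists p, nth_error es i = Some (EInv p (kind_of r)) /\
       (forall j r', response es i j r' -> r' = r)) /\
    (forall i j r, response es i j r -> In (i, r) L) /\
    (forall i1 r1 i2 r2 j1 r1', In (i1, r1) L -> In (i2, r2) L ->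
       response es i1 j1 r1' -> j1 < i2 -> precedes L (i1, r1) (i2, r2)) /\
    legal_from k 0 (map snd L).

Definition prefix (sigma : nat -> nat * OpKind) (t : nat) : list (nat * OpKind) :=
  map sigma (seq 0 t).

Definition is_res_of (p : nat) (e : Event) : bool :=
  match e with ERes q _ => Nat.eqb q p | _ => false end.

(** Step complexity when each access to the max-register costs g steps
    (the max-register being implemented from read-write registers) and
    every other step of Algorithm A costs one step.  cost_from counts the
    cost of the steps of p up to and including its next response. *)
Fixpoint cost_from (g p : nat) (es : list Event) : nat :=
  match es with
  | [] => 0
  | e :: es' =>
      match e with
      | ERes q _ => if Nat.eqb q p then 1 else cost_from g p es'
      | EInv q _ => if Nat.eqb q p then 1 + cost_from g p es' else cost_from g p es'
      | EMaxWrite q _ | EMaxRead q _ =>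
          if Nat.eqb q p then g + cost_from g p es' else cost_from g p es'
      end
  end.

Definition op_cost (g : nat) (es : list Event) (i p : nat) : nat :=
  1 + cost_from g p (skipn (S i) es).

(* Linearize an Increment that performs a MaxWrite at that MaxWrite, every other Increment
   at its invocation, and a Read at its MaxRead.  A process that has written the value j has
   performed 2^j Increments, and it writes j + 1 only after 2^j further ones; so when the
   register holds r >= 0 the number V of linearized Increments satisfies
   2^r <= V <= n 2^(r+1), and k 2^r lies in [V/k, kV] as soon as k^2 >= 2n.  The same
   count bounds the largest value written by log2 of the number of Increments.  Each
   operation makes at most one register access and returns within three of its own steps,
   which gives wait-freedom and the O(log h) = O(log log m) step bound. *)

From Stdlib Require Import Reals List Arith ZArith Lia Lra.
Import ListNotations.

Lemma nth_error_lt {A} (l : list A) i y : nth_error l i = Some y -> i < length l.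
Proof. intros H. apply nth_error_Some. congruence. Qed.

Lemma nth_error_snoc_length {A} (l : list A) x : nth_error (l ++ [x]) (length l) = Some x.
Proof. rewrite nth_error_app2, Nat.sub_diag by lia. reflexivity. Qed.

Lemma nth_error_snoc_inv {A} (l : list A) x i y : nth_error (l ++ [x]) i = Some y ->
  (i < length l /\ nth_error l i = Some y) \/ (i = length l /\ y = x).
Proof.
  intros H. destruct (Nat.lt_ge_cases i (length l)) as [Hi|Hi].
  - left. rewrite nth_error_app1 in H; auto.
  - right. rewrite nth_error_app2 in H by auto.
    destruct (i - length l) eqn:E; simpl in H.
    + injection H as ->. split; auto. lia.
    + rewrite nth_error_nil in H. discriminate.
Qed.

Definition owner (e : Event) : nat :=
  match e with EInv p _ | ERes p _ | EMaxWrite p _ | EMaxRead p _ => p end.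

Lemma hl_of_owner q e : owner e <> q -> hl_of q e = false.
Proof. destruct e; simpl; intros H; auto; apply Nat.eqb_neq; auto. Qed.

Definition no_hl_after (es : list Event) (p i : nat) : Prop :=
  forall l e, i < l -> nth_error es l = Some e -> hl_of p e = false.

Lemma no_hl_after_snoc es p i e :
  no_hl_after es p i -> hl_of p e = false -> no_hl_after (es ++ [e]) p i.
Proof.
  intros H He l e' Hl Hn. apply nth_error_snoc_inv in Hn as [[_ Hn]|[_ ->]]; eauto.
Qed.

Lemma response_bounds es i j r : response es i j r -> i < j /\ j < length es.
Proof. intros (p & o & _ & Hij & Hj & _). split; eauto using nth_error_lt. Qed.

Lemma response_snoc es e i j r : response es i j r -> response (es ++ [e]) i j r.
Proof.
  intros H. destruct (response_bounds _ _ _ _ H) as [Hij Hj].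
  destruct H as (p & o & Hi & Hij' & Hj' & Hno). exists p, o.
  rewrite !nth_error_app1 by lia. repeat split; auto.
  intros l e' Hl1 Hl2 He. rewrite nth_error_app1 in He by lia. eauto.
Qed.

Lemma response_snoc_inv es e i j r :
  response (es ++ [e]) i j r -> j < length es -> response es i j r.
Proof.
  intros (p & o & Hi & Hij & Hj' & Hno) Hj. exists p, o.
  rewrite !nth_error_app1 in * by lia. repeat split; auto.
  intros l e' Hl1 Hl2 He. apply (Hno l e'); auto. rewrite nth_error_app1 by lia. auto.
Qed.

Lemma response_snoc_not_res es e i j r : (forall q r, e <> ERes q r) ->
  response (es ++ [e]) i j r -> response es i j r.
Proof.
  intros He H. apply response_snoc_inv with e; auto.
  destruct (response_bounds _ _ _ _ H) as [_ Hj]. rewrite last_length in Hj.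
  destruct (Nat.eq_dec j (length es)) as [->|]; [|lia].
  destruct H as (p & o & _ & _ & Hj' & _). rewrite nth_error_snoc_length in Hj'.
  injection Hj' as ->. exfalso. exact (He p r eq_refl).
Qed.

Lemma response_snoc_res_lt es e : (forall q r, e <> ERes q r) ->
  forall i j r, response (es ++ [e]) i j r -> j < length es.
Proof.
  intros He i j r H. apply response_snoc_not_res in H; auto.
  apply response_bounds in H. lia.
Qed.

Lemma no_response_snoc_length es e j r : ~ response (es ++ [e]) (length es) j r.
Proof. intros H. apply response_bounds in H. rewrite last_length in H. lia. Qed.

Lemma pending_no_response es i p o j r :
  nth_error es i = Some (EInv p o) -> no_hl_after es p i -> ~ response es i j r.
Proof.
  intros Hi Hno (q & o' & Hi' & Hij & Hj & _). rewrite Hi in Hi'. injection Hi' as <- <-.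
  specialize (Hno _ _ Hij Hj). simpl in Hno. rewrite Nat.eqb_refl in Hno. discriminate.
Qed.

Lemma response_snoc_completes es i p o r :
  nth_error es i = Some (EInv p o) -> no_hl_after es p i -> i < length es ->
  response (es ++ [ERes p r]) i (length es) r.
Proof.
  intros Hi Hno Hl. exists p, o. rewrite nth_error_app1, nth_error_snoc_length by auto.
  repeat split; auto.
  intros l e H1 H2 H3. rewrite nth_error_app1 in H3 by auto. eauto.
Qed.

Lemma response_snoc_last es p i0 o0 r i r' :
  nth_error es i0 = Some (EInv p o0) -> no_hl_after es p i0 ->
  response (es ++ [ERes p r]) i (length es) r' -> i = i0 /\ r' = r.
Proof.
  intros Hi0 Hno (q & o & Hi & Hij & Hj & Hbetween).
  rewrite nth_error_snoc_length in Hj. injection Hj as <- <-.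
  rewrite nth_error_app1 in Hi by lia.
  pose proof (nth_error_lt _ _ _ Hi0) as Hi0l.
  split; auto.
  destruct (Nat.lt_total i i0) as [Hlt|[Heq|Hgt]]; auto; exfalso.
  - assert (H := Hbetween i0 (EInv p o0) Hlt Hi0l).
    rewrite nth_error_app1, Hi0 in H by auto. specialize (H eq_refl).
    simpl in H. rewrite Nat.eqb_refl in H. discriminate.
  - specialize (Hno i _ Hgt Hi). simpl in Hno. rewrite Nat.eqb_refl in Hno. discriminate.
Qed.
Definition event_cost (g p : nat) (e : Event) : nat :=
  match e with
  | ERes q _ | EInv q _ => if Nat.eqb q p then 1 else 0
  | EMaxWrite q _ | EMaxRead q _ => if Nat.eqb q p then g else 0
  end.

Lemma event_cost_owner g q e : owner e <> q -> event_cost g q e = 0.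
Proof. destruct e; simpl; intros H; apply Nat.eqb_neq in H; rewrite H; auto. Qed.

Lemma cost_from_snoc g p l e : cost_from g p (l ++ [e]) =
  if existsb (is_res_of p) l then cost_from g p l else cost_from g p l + event_cost g p e.
Proof.
  induction l as [|x l IH]; simpl.
  - destruct e; simpl; destruct (Nat.eqb p0 p); lia.
  - destruct x; simpl; destruct (Nat.eqb p0 p); rewrite ?IH;
      destruct (existsb (is_res_of p) l); simpl; lia.
Qed.

Lemma skipn_snoc {A} (l : list A) x n : n <= length l -> skipn n (l ++ [x]) = skipn n l ++ [x].
Proof. intros H. rewrite skipn_app. replace (n - length l) with 0 by lia. reflexivity. Qed.

Lemma cost_from_snoc_complete g es e i j r q o :
  response es i j r -> nth_error es i = Some (EInv q o) ->
  cost_from g q (skipn (S i) (es ++ [e])) = cost_from g q (skipn (S i) es).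
Proof.
  intros H Hi. destruct (response_bounds _ _ _ _ H) as [Hij Hj].
  rewrite skipn_snoc, cost_from_snoc by lia.
  replace (existsb (is_res_of q) (skipn (S i) es)) with true; auto.
  symmetry. apply existsb_exists. exists (ERes q r). split.
  - destruct H as (q' & o' & Hi' & _ & Hj' & _). rewrite Hi in Hi'. injection Hi' as <- <-.
    apply nth_error_In with (j - S i). rewrite nth_error_skipn.
    replace (S i + (j - S i)) with j by lia. auto.
  - simpl. apply Nat.eqb_refl.
Qed.

Lemma cost_from_snoc_pending g es e i q : no_hl_after es q i -> i < length es ->
  cost_from g q (skipn (S i) (es ++ [e])) = cost_from g q (skipn (S i) es) + event_cost g q e.
Proof.
  intros Hno Hi. rewrite skipn_snoc, cost_from_snoc by lia.
  replace (existsb (is_res_of q) (skipn (S i) es)) with false; auto.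
  symmetry. apply Bool.not_true_iff_false. intros Hx.
  apply existsb_exists in Hx as [x [Hin Hx]].
  apply In_nth_error in Hin as [l Hl]. rewrite nth_error_skipn in Hl.
  specialize (Hno (S i + l) x ltac:(lia) Hl). destruct x; simpl in *; congruence.
Qed.

Fixpoint sum_below (n : nat) (f : nat -> nat) : nat :=
  match n with 0 => 0 | S n' => sum_below n' f + f n' end.

Lemma sum_below_ext n f h : (forall q, q < n -> f q = h q) -> sum_below n f = sum_below n h.
Proof. induction n; simpl; intros H; auto. rewrite IHn, H by auto. reflexivity. Qed.

Lemma sum_below_update n f h p : p < n -> (forall q, q <> p -> f q = h q) ->
  sum_below n f + h p = sum_below n h + f p.
Proof.
  induction n; simpl; intros Hp H; [lia|].
  destruct (Nat.eq_dec p n) as [->|Hne].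
  - rewrite (sum_below_ext n f h); [lia|]. intros q Hq. apply H. lia.
  - rewrite (H n) by auto. specialize (IHn ltac:(lia) H). lia.
Qed.

Lemma le_sum_below n f p : p < n -> f p <= sum_below n f.
Proof.
  induction n; simpl; intros Hp; [lia|].
  destruct (Nat.eq_dec p n) as [->|]; [lia|]. specialize (IHn ltac:(lia)). lia.
Qed.

Lemma sum_below_le n f b : (forall q, q < n -> f q <= b) -> sum_below n f <= n * b.
Proof.
  induction n; simpl; intros H; [lia|].
  specialize (IHn ltac:(auto)). specialize (H n ltac:(lia)). lia.
Qed.

Lemma sum_below_zero n f : (forall q, q < n -> f q = 0) -> sum_below n f = 0.
Proof. induction n; simpl; intros H; auto. rewrite IHn, H by auto. reflexivity. Qed.

Lemma upd_eq f p s : upd f p s p = s.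
Proof. unfold upd. rewrite Nat.eqb_refl. reflexivity. Qed.

Lemma upd_neq f p s q : q <> p -> upd f p s q = f q.
Proof. unfold upd. intros H. apply Nat.eqb_neq in H. rewrite H. reflexivity. Qed.

Lemma sum_below_upd n (f : LState -> nat) l p s : p < n ->
  sum_below n (fun q => f (upd l p s q)) + f (l p) = sum_below n (fun q => f (l q)) + f s.
Proof.
  intros Hp. replace (f s) with (f (upd l p s p)) by (rewrite upd_eq; reflexivity).
  apply (sum_below_update n (fun q => f (upd l p s q)) (fun q => f (l q))); auto.
  intros q Hq. rewrite upd_neq; auto.
Qed.

Lemma sum_below_upd_same n (f : LState -> nat) l p s : f s = f (l p) ->
  sum_below n (fun q => f (upd l p s q)) = sum_below n (fun q => f (l q)).
Proof.
  intros H. apply sum_below_ext. intros q _.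
  destruct (Nat.eq_dec q p) as [->|]; [rewrite upd_eq; auto | rewrite upd_neq; auto].
Qed.

Lemma one_le_pow2 j : 1 <= 2 ^ j.
Proof. induction j; simpl; lia. Qed.

Definition threshold_of (nv : nat) : nat := match nv with 0 => 1 | S j => 2 ^ j end.

(* After its (j+1)-st MaxWrite a process has performed 1 + 1 + 2 + ... + 2^(j-1) = 2^j
   Increments. *)
Definition written_incs (nv : nat) : nat := match nv with 0 => 0 | S j => 2 ^ j end.

Definition local_ok (s : LState) : Prop :=
  threshold s = threshold_of (nextVal s) /\
  match pc s with
  | IncWrite v => v = nextVal s /\ lcounter s = threshold s
  | _ => lcounter s < threshold s
  end.

Definition invoked_incs (s : LState) : nat := written_incs (nextVal s) + lcounter s.

Definition linearized_incs (s : LState) : nat :=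
  match pc s with IncWrite _ => invoked_incs s - 1 | _ => invoked_incs s end.

Lemma linearized_incs_le s : local_ok s -> linearized_incs s <= 2 ^ nextVal s.
Proof.
  destruct s as [lc thr [|nv] x]; unfold local_ok, linearized_incs, invoked_incs;
    simpl; intros [-> Hx]; destruct x; lia.
Qed.

Lemma linearized_incs_ge s j : local_ok s -> nextVal s = S j -> 2 ^ j <= linearized_incs s.
Proof.
  destruct s as [lc thr nv x]; unfold local_ok, linearized_incs, invoked_incs;
    simpl; intros [-> Hx] ->; simpl in *.
  pose proof (one_le_pow2 j). destruct x; lia.
Qed.

Lemma linearized_incs_nextVal_0 s : local_ok s -> nextVal s = 0 -> linearized_incs s = 0.
Proof.
  destruct s as [lc thr nv x]; unfold local_ok, linearized_incs, invoked_incs;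
    simpl; intros [-> Hx] ->; simpl in *. destruct x; lia.
Qed.

Lemma num_incs_snoc es e :
  num_incs (es ++ [e]) = num_incs es + (if is_inc_inv e then 1 else 0).
Proof.
  unfold num_incs. rewrite filter_app, length_app. simpl. destruct (is_inc_inv e); simpl; lia.
Qed.

Record count_inv (n : nat) (c : Config) (es : list Event) : Prop := {
  ci_local : forall q, local_ok (loc c q);
  ci_nextVal_le_reg : forall q, (Z.of_nat (nextVal (loc c q)) <= reg c + 1)%Z;
  ci_reg_attained : (0 <= reg c)%Z ->
    exists q, q < n /\ Z.of_nat (nextVal (loc c q)) = (reg c + 1)%Z;
  ci_num_incs : num_incs es = sum_below n (fun q => invoked_incs (loc c q));
  ci_maxwrite : forall p v, In (EMaxWrite p v) es -> 2 ^ v <= num_incs es }.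

Lemma count_inv_init n : count_inv n init_config [].
Proof.
  constructor; simpl; intros; try tauto; try lia.
  - unfold local_ok; simpl; lia.
  - rewrite sum_below_zero; auto.
Qed.

Lemma count_inv_local n c es p s e :
  count_inv n c es -> p < n -> local_ok s -> nextVal s = nextVal (loc c p) ->
  invoked_incs s = invoked_incs (loc c p) + (if is_inc_inv e then 1 else 0) ->
  (forall q v, e <> EMaxWrite q v) ->
  count_inv n (mkC (upd (loc c) p s) (reg c)) (es ++ [e]).
Proof.
  intros [Hloc Hle Hatt Hnum Hmw] Hp Hs Hnv Hinc He.
  assert (Hnv' : forall q, nextVal (upd (loc c) p s q) = nextVal (loc c q)).
  { intros q. destruct (Nat.eq_dec q p) as [->|]; [rewrite upd_eq | rewrite upd_neq]; auto. }
  constructor; cbn [loc reg].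
  - intros q. destruct (Nat.eq_dec q p) as [->|]; [rewrite upd_eq | rewrite upd_neq]; auto.
  - intros q. rewrite Hnv'. auto.
  - intros Hr. destruct (Hatt Hr) as [q Hq]. exists q. rewrite Hnv'. auto.
  - pose proof (sum_below_upd n invoked_incs (loc c) p s Hp). rewrite num_incs_snoc. lia.
  - intros q v Hin. rewrite num_incs_snoc.
    apply in_app_or in Hin as [Hin|[Hin|[]]]; [specialize (Hmw _ _ Hin); lia|].
    exfalso. eapply He. eauto.
Qed.

Lemma count_inv_write n c es p lc thr nv v :
  count_inv n c es -> p < n -> loc c p = mkL lc thr nv (IncWrite v) ->
  count_inv n (mkC (upd (loc c) p (mkL 0 (if Nat.leb 2 (S nv) then 2 * thr else thr) (S nv) IncRet))
                   (Z.max (reg c) (Z.of_nat v)))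
    (es ++ [EMaxWrite p v]).
Proof.
  intros [Hloc Hle Hatt Hnum Hmw] Hp Hs.
  assert (Hp_ok := Hloc p). rewrite Hs in Hp_ok.
  destruct Hp_ok as [Hthr [Hv Hlc]]. simpl in Hthr, Hv, Hlc. subst v lc.
  set (s := mkL 0 (if Nat.leb 2 (S nv) then 2 * thr else thr) (S nv) IncRet).
  assert (Hinc : invoked_incs s = invoked_incs (loc c p)).
  { rewrite Hs. unfold invoked_incs; simpl. subst thr. destruct nv; simpl; lia. }
  constructor; cbn [loc reg].
  - intros q. destruct (Nat.eq_dec q p) as [->|]; [rewrite upd_eq | rewrite upd_neq]; auto.
    unfold local_ok; simpl. subst thr.
    destruct nv; simpl; [lia|]. pose proof (one_le_pow2 nv). lia.
  - intros q. destruct (Nat.eq_dec q p) as [->|]; [rewrite upd_eq; simpl; lia|].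
    rewrite upd_neq by auto. specialize (Hle q). lia.
  - intros Hr. destruct (Z_lt_le_dec (reg c) (Z.of_nat nv)).
    + exists p. rewrite upd_eq. simpl. lia.
    + destruct (Hatt ltac:(lia)) as [q [Hq Hq']]. exists q. split; auto.
      destruct (Nat.eq_dec q p) as [->|]; [rewrite Hs in Hq'; simpl in Hq'; lia|].
      rewrite upd_neq; auto. lia.
  - rewrite num_incs_snoc, Hnum. simpl. rewrite Nat.add_0_r.
    symmetry. apply sum_below_upd_same. auto.
  - intros q v Hin. rewrite num_incs_snoc, Nat.add_0_r.
    apply in_app_or in Hin as [Hin|[Hin|[]]]; [eauto|]. inversion Hin; subst q v.
    rewrite Hnum. eapply Nat.le_trans; [|apply (le_sum_below n _ p Hp)].
    simpl. rewrite Hs. unfold invoked_incs; simpl. subst thr. destruct nv; simpl; lia.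
Qed.

Lemma count_inv_step n k c es a : count_inv n c es -> fst a < n ->
  count_inv n (fst (step k c a)) (es ++ [snd (step k c a)]).
Proof.
  intros I Hp. destruct a as [p o]; simpl in Hp.
  destruct (loc c p) as [lc thr nv x] eqn:Hs.
  assert (Hl := ci_local _ _ _ I p). rewrite Hs in Hl. unfold local_ok in Hl; simpl in Hl.
  unfold step. rewrite Hs. cbn [pc lcounter threshold nextVal].
  destruct x; [destruct o; [destruct (Nat.eqb_spec (S lc) thr)|]|..]; cbn [fst snd].
  all: try (eapply count_inv_write; eauto; fail).
  all: apply count_inv_local; auto; try (intros; discriminate); rewrite ?Hs;
    unfold local_ok, invoked_incs; simpl; lia.
Qed.

Lemma run_from_snoc k c s a : run_from k c (s ++ [a]) =
  (fst (step k (fst (run_from k c s)) a),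
   snd (run_from k c s) ++ [snd (step k (fst (run_from k c s)) a)]).
Proof.
  revert c; induction s as [|b s IH]; intros c; simpl.
  - destruct (step k c a); reflexivity.
  - destruct (step k c b) as [c1 e1]. rewrite IH. destruct (run_from k c1 s); reflexivity.
Qed.

Lemma invariant_reachable n k (Inv : Config -> list Event -> Prop) sched :
  Inv init_config [] ->
  (forall c es a, Inv c es -> fst a < n -> Inv (fst (step k c a)) (es ++ [snd (step k c a)])) ->
  valid_sched n sched -> Inv (fst (run_from k init_config sched)) (events k sched).
Proof.
  intros Hinit Hstep. induction sched as [|a s IH] using rev_ind; intros Hv; auto.
  unfold events in *. rewrite run_from_snoc. apply Hstep.
  - apply IH. intros b Hb. apply Hv, in_or_app. auto.
  - apply Hv, in_or_app. simpl. auto.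
Qed.

Lemma count_inv_reachable n k sched : valid_sched n sched ->
  count_inv n (fst (run_from k init_config sched)) (events k sched).
Proof.
  apply invariant_reachable; [apply count_inv_init|]. intros. apply count_inv_step; auto.
Qed.

Fixpoint count_incs (l : list Resp) : nat :=
  match l with [] => 0 | RInc :: l' => S (count_incs l') | RRead _ :: l' => count_incs l' end.

Lemma count_incs_snoc l r :
  count_incs (l ++ [r]) = count_incs l + (match r with RInc => 1 | RRead _ => 0 end).
Proof.
  induction l as [|x l IH]; simpl; [destruct r; auto|]. destruct x; simpl; rewrite IH; lia.
Qed.

Lemma legal_from_snoc k v l r : legal_from k v l ->
  (match r with
   | RInc => True
   | RRead x => INR (v + count_incs l) / k <= x <= k * INR (v + count_incs l)
   end)%R ->
  legal_from k v (l ++ [r]).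
Proof.
  revert v; induction l as [|x l IH]; simpl; intros v Hl Hr.
  - destruct r; simpl; auto. rewrite Nat.add_0_r in Hr. auto.
  - destruct x as [|y].
    + apply IH; auto. destruct r; auto.
      replace (S v + count_incs l) with (v + S (count_incs l)) by lia. auto.
    + destruct Hl. split; auto.
Qed.

Lemma NoDup_map_fst_unique {A B} (L : list (A * B)) i a b :
  NoDup (map fst L) -> In (i, a) L -> In (i, b) L -> a = b.
Proof.
  induction L as [|x L IH]; simpl; intros Hn Ha Hb; [tauto|].
  inversion Hn as [|y l Hy Hl]; subst.
  destruct Ha as [Ha|Ha]; destruct Hb as [Hb|Hb]; subst.
  - injection Hb. auto.
  - exfalso. apply Hy. exact (in_map fst L (i, b) Hb).
  - exfalso. apply Hy. exact (in_map fst L (i, a) Ha).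
  - eauto.
Qed.

Lemma NoDup_map_fst_snoc {A B} (L : list (A * B)) i r :
  NoDup (map fst L) -> ~ In i (map fst L) -> NoDup (map fst (L ++ [(i, r)])).
Proof.
  intros H1 H2. rewrite map_app. apply NoDup_app; auto; [repeat constructor; auto|].
  intros a Ha [Ha'|[]]. subst. auto.
Qed.

Definition entries_ok (es : list Event) (L : list (nat * Resp)) : Prop :=
  forall i r, In (i, r) L -> i < length es /\
    (exists p, nth_error es i = Some (EInv p (kind_of r))) /\
    (forall j r', response es i j r' -> r' = r).

Definition real_time_ok (es : list Event) (L : list (nat * Resp)) : Prop :=
  forall i1 r1 i2 r2 j1 r1', In (i1, r1) L -> In (i2, r2) L ->
    response es i1 j1 r1' -> j1 < i2 -> precedes L (i1, r1) (i2, r2).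

Lemma entries_lt es L i : entries_ok es L -> In i (map fst L) -> i < length es.
Proof.
  intros H Hin. apply in_map_iff in Hin as [[i' r] [<- Hin]]. apply (H _ _ Hin).
Qed.

Lemma entries_ok_snoc es L e : entries_ok es L -> (forall q r, e <> ERes q r) ->
  entries_ok (es ++ [e]) L.
Proof.
  intros H He i r Hin. destruct (H i r Hin) as (Hi & [p Hp] & Hr). repeat split.
  - rewrite last_length. lia.
  - exists p. rewrite nth_error_app1; auto.
  - intros j r' Hr'. eapply Hr, response_snoc_not_res; eauto.
Qed.

Lemma entries_ok_snoc_entry es L e i r : entries_ok es L -> (forall q r, e <> ERes q r) ->
  i < length (es ++ [e]) -> (exists p, nth_error (es ++ [e]) i = Some (EInv p (kind_of r))) ->
  (forall j r', ~ response (es ++ [e]) i j r') ->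
  entries_ok (es ++ [e]) (L ++ [(i, r)]).
Proof.
  intros H He Hi Hinv Hno i' r' Hin. apply in_app_or in Hin as [Hin|[Hin|[]]].
  - eapply entries_ok_snoc; eauto.
  - injection Hin as <- <-. repeat split; auto. intros j r2 Hr2. exfalso. eapply Hno; eauto.
Qed.

Lemma entries_ok_snoc_res es L p r i0 o0 : entries_ok es L -> NoDup (map fst L) ->
  nth_error es i0 = Some (EInv p o0) -> no_hl_after es p i0 -> In (i0, r) L ->
  entries_ok (es ++ [ERes p r]) L.
Proof.
  intros H Hnd Hi0 Hno Hin i r1 Hin1. destruct (H _ _ Hin1) as (Hi & [q Hq] & Hr). repeat split.
  - rewrite last_length. lia.
  - exists q. rewrite nth_error_app1; auto.
  - intros j r' Hr'. destruct (response_bounds _ _ _ _ Hr') as [_ Hj]. rewrite last_length in Hj.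
    destruct (Nat.eq_dec j (length es)) as [->|].
    + destruct (response_snoc_last _ _ _ _ _ _ _ Hi0 Hno Hr') as [-> ->].
      eapply NoDup_map_fst_unique; eauto.
    + apply Hr with j. apply response_snoc_inv with (ERes p r); auto. lia.
Qed.

Lemma real_time_ok_snoc es e L : real_time_ok es L ->
  (forall i j r, response (es ++ [e]) i j r -> j < length es) -> real_time_ok (es ++ [e]) L.
Proof.
  intros H Hj i1 r1 i2 r2 j1 r1' H1 H2 Hr Hlt.
  eapply H; eauto. apply response_snoc_inv with e; eauto.
Qed.

Lemma real_time_ok_snoc_res es e L : real_time_ok es L -> entries_ok es L ->
  real_time_ok (es ++ [e]) L.
Proof.
  intros H HL i1 r1 i2 r2 j1 r1' H1 H2 Hr Hlt.
  destruct (response_bounds _ _ _ _ Hr) as [_ Hj]. rewrite last_length in Hj.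
  destruct (Nat.eq_dec j1 (length es)) as [->|].
  - destruct (HL _ _ H2) as [Hi2 _]. lia.
  - apply (H i1 r1 i2 r2 j1 r1'); auto. apply response_snoc_inv with e; auto. lia.
Qed.

Lemma real_time_ok_snoc_entry es e L x : real_time_ok es L ->
  (forall j r, ~ response (es ++ [e]) (fst x) j r) ->
  (forall i j r, response (es ++ [e]) i j r -> j < length es) ->
  real_time_ok (es ++ [e]) (L ++ [x]).
Proof.
  intros H Hx Hj i1 r1 i2 r2 j1 r1' H1 H2 Hr Hlt.
  apply in_app_or in H1 as [H1|[Hx1|[]]]; [|subst x; exfalso; exact (Hx _ _ Hr)].
  destruct (In_nth_error _ _ H1) as [a Ha]. pose proof (nth_error_lt _ _ _ Ha).
  apply in_app_or in H2 as [H2|[Hx2|[]]].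
  - destruct (H _ _ _ _ _ _ H1 H2 (response_snoc_inv _ _ _ _ _ Hr (Hj _ _ _ Hr)) Hlt)
      as (a' & b & Ha' & Hb & Hab).
    exists a', b. rewrite !nth_error_app1 by eauto using nth_error_lt. auto.
  - subst x. exists a, (length L). rewrite nth_error_app1, nth_error_snoc_length by auto. auto.
Qed.

Definition kind_of_pc (x : PC) : OpKind :=
  match x with ReadRead | ReadRet _ => ORead | _ => OInc end.

(* What the linearization records about the pending operation of a process in state x:
   nothing yet before its register access, the response it will return afterwards. *)
Definition pc_linearized (x : PC) (L : list (nat * Resp)) (i : nat) : Prop :=
  match x with
  | Idle => True
  | IncWrite _ | ReadRead => ~ In i (map fst L)
  | IncRet => In (i, RInc) L
  | ReadRet y => In (i, RRead y) L
  end.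

Definition before_access (x : PC) : Prop :=
  match x with IncWrite _ | ReadRead => True | _ => False end.

Definition after_access (x : PC) : Prop :=
  match x with IncRet | ReadRet _ => True | _ => False end.

Definition response_of_pc (x : PC) : Resp := match x with ReadRet y => RRead y | _ => RInc end.

Definition remaining_cost (g : nat) (x : PC) : nat :=
  match x with Idle => 0 | IncWrite _ | ReadRead => S g | IncRet | ReadRet _ => 1 end.

Definition pending_ok (es : list Event) (L : list (nat * Resp)) (cq p : nat) (x : PC) : Prop :=
  cq < length es /\ nth_error es cq = Some (EInv p (kind_of_pc x)) /\
  no_hl_after es p cq /\ pc_linearized x L cq.

Definition cost_ok (g : nat) (es : list Event) (i q cq : nat) (x : PC) : Prop :=
  ((exists j r, response es i j r) /\ cost_from g q (skipn (S i) es) <= S g) \/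
  (i = cq /\ x <> Idle /\ cost_from g q (skipn (S i) es) + remaining_cost g x <= S g).

Definition proc_ok (g : nat) (es : list Event) (L : list (nat * Resp)) (q cq : nat) (x : PC)
  : Prop :=
  (x <> Idle -> pending_ok es L cq q x) /\
  (forall i o, nth_error es i = Some (EInv q o) -> cost_ok g es i q cq x).

Lemma cost_ok_snoc_complete g es e i q cq x o j r :
  nth_error es i = Some (EInv q o) -> response es i j r ->
  cost_from g q (skipn (S i) es) <= S g -> cost_ok g (es ++ [e]) i q cq x.
Proof.
  intros Hi Hr Hc. left. split; [exists j, r; apply response_snoc; auto|].
  erewrite cost_from_snoc_complete; eauto.
Qed.

Lemma proc_ok_frame g es L extra e q cq x :
  proc_ok g es L q cq x -> owner e <> q ->
  (forall j r o, In (j, r) extra -> nth_error es j <> Some (EInv q o)) ->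
  proc_ok g (es ++ [e]) (L ++ extra) q cq x.
Proof.
  intros [Hpend Hcost] He Hextra. split.
  - intros Hx. destruct (Hpend Hx) as (Hcq & Hinv & Hno & Hlin). repeat split.
    + rewrite last_length. lia.
    + rewrite nth_error_app1; auto.
    + apply no_hl_after_snoc; auto using hl_of_owner.
    + destruct x; simpl in *; auto using in_or_app.
      all: rewrite map_app, in_app_iff; intros [Hin|Hin]; auto;
        apply in_map_iff in Hin as [[j r] [Hj Hin]]; simpl in Hj; subst j;
        eapply Hextra; eauto.
  - intros i o Hi. apply nth_error_snoc_inv in Hi as [[Hil Hi]|[-> Hi]].
    2:{ subst e. simpl in He. congruence. }
    destruct (Hcost i o Hi) as [[[j [r Hr]] Hc]|(-> & Hx & Hc)].
    + eapply cost_ok_snoc_complete; eauto.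
    + right. destruct (Hpend Hx) as (Hcq & _ & Hno & _).
      rewrite cost_from_snoc_pending, event_cost_owner by auto. repeat split; auto. lia.
Qed.

Lemma proc_ok_invoke g es L L' p cq x :
  proc_ok g es L p cq Idle -> x <> Idle -> pc_linearized x L' (length es) ->
  proc_ok g (es ++ [EInv p (kind_of_pc x)]) L' p (length es) x.
Proof.
  intros [_ Hcost] Hx Hlin. split.
  - intros _. repeat split; auto.
    + rewrite last_length. lia.
    + apply nth_error_snoc_length.
    + intros l e Hl Hn. apply nth_error_lt in Hn. rewrite last_length in Hn. lia.
  - intros i o Hi. apply nth_error_snoc_inv in Hi as [[_ Hi]|[-> _]].
    + destruct (Hcost i o Hi) as [[[j [r Hr]] Hc]|(_ & Hx' & _)]; [|contradiction].
      eapply cost_ok_snoc_complete; eauto.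
    + right. rewrite skipn_all2 by (rewrite last_length; lia). simpl.
      repeat split; auto. destruct x; simpl; lia.
Qed.

Lemma proc_ok_access g es L L' e p cq x x' :
  proc_ok g es L p cq x -> before_access x ->
  hl_of p e = false -> event_cost g p e = g ->
  after_access x' -> kind_of_pc x' = kind_of_pc x -> pc_linearized x' L' cq ->
  proc_ok g (es ++ [e]) L' p cq x'.
Proof.
  intros [Hpend Hcost] Hx He Hcoste Hx' Hkind Hlin.
  assert (Hxi : x <> Idle) by (intros ->; contradiction).
  assert (Hxi' : x' <> Idle) by (intros ->; contradiction).
  destruct (Hpend Hxi) as (Hcq & Hinv & Hno & _). split.
  - intros _. repeat split; auto.
    + rewrite last_length. lia.
    + rewrite nth_error_app1, Hkind; auto.
    + apply no_hl_after_snoc; auto.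
  - intros i o Hi. apply nth_error_snoc_inv in Hi as [[Hil Hi]|[-> Hi]].
    2:{ subst e. simpl in He. rewrite Nat.eqb_refl in He. discriminate. }
    destruct (Hcost i o Hi) as [[[j [r Hr]] Hc]|(-> & _ & Hc)].
    + eapply cost_ok_snoc_complete; eauto.
    + right. rewrite cost_from_snoc_pending by auto. repeat split; auto.
      destruct x; try contradiction; destruct x'; try contradiction; simpl in *; lia.
Qed.

Lemma proc_ok_return g es L p cq x :
  proc_ok g es L p cq x -> after_access x ->
  proc_ok g (es ++ [ERes p (response_of_pc x)]) L p cq Idle.
Proof.
  intros [Hpend Hcost] Hx.
  assert (Hxi : x <> Idle) by (intros ->; contradiction).
  destruct (Hpend Hxi) as (Hcq & Hinv & Hno & _). split.
  - intros H. contradiction.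
  - intros i o Hi. apply nth_error_snoc_inv in Hi as [[Hil Hi]|[-> Hi]]; [|discriminate].
    destruct (Hcost i o Hi) as [[[j [r' Hr]] Hc]|(-> & _ & Hc)].
    + eapply cost_ok_snoc_complete; eauto.
    + left. split.
      * exists (length es), (response_of_pc x). eapply response_snoc_completes; eauto.
      * rewrite cost_from_snoc_pending by auto. cbn [event_cost]. rewrite Nat.eqb_refl.
        destruct x; try contradiction; exact Hc.
Qed.

Definition upd_nat (f : nat -> nat) (p v : nat) : nat -> nat :=
  fun q => if Nat.eqb q p then v else f q.

Lemma upd_nat_eq f p v : upd_nat f p v p = v.
Proof. unfold upd_nat. rewrite Nat.eqb_refl. reflexivity. Qed.

Lemma upd_nat_neq f p v q : q <> p -> upd_nat f p v q = f q.
Proof. unfold upd_nat. intros H. apply Nat.eqb_neq in H. rewrite H. reflexivity. Qed.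

(* L is the linearization built so far and cur q the position of q's latest invocation. *)
Record lin_inv (n : nat) (k : R) (g : nat) (c : Config) (es : list Event)
    (L : list (nat * Resp)) (cur : nat -> nat) : Prop := {
  li_incs : count_incs (map snd L) = sum_below n (fun q => linearized_incs (loc c q));
  li_nodup : NoDup (map fst L);
  li_entries : entries_ok es L;
  li_real_time : real_time_ok es L;
  li_legal : legal_from k 0 (map snd L);
  li_complete : forall i j r, response es i j r -> In (i, r) L;
  li_procs : forall q, proc_ok g es L q (cur q) (pc (loc c q)) }.

Lemma lin_inv_init n k g : lin_inv n k g init_config [] [] (fun _ => 0).
Proof.
  constructor; simpl.
  - rewrite sum_below_zero; auto.
  - constructor.
  - intros i r [].
  - intros i1 r1 i2 r2 j1 r1' [].
  - auto.
  - intros i j r H. apply response_bounds in H. simpl in H. lia.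
  - intros q. split; [intros []; reflexivity|].
    intros i o Hi. rewrite nth_error_nil in Hi. discriminate.
Qed.

Lemma lin_inv_invoke_pending n k g c es L cur p s :
  lin_inv n k g c es L cur -> pc (loc c p) = Idle -> before_access (pc s) ->
  linearized_incs s = linearized_incs (loc c p) ->
  lin_inv n k g (mkC (upd (loc c) p s) (reg c)) (es ++ [EInv p (kind_of_pc (pc s))]) L
    (upd_nat cur p (length es)).
Proof.
  intros [Hincs Hnd Hent Hrt Hleg Hcomp Hprocs] Hidle Hs Hls.
  assert (Hnres : forall q r, EInv p (kind_of_pc (pc s)) <> ERes q r) by discriminate.
  constructor; cbn [loc].
  - rewrite Hincs. symmetry. apply sum_below_upd_same. auto.
  - auto.
  - apply entries_ok_snoc; auto.
  - apply real_time_ok_snoc, response_snoc_res_lt; auto.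
  - auto.
  - intros i j r Hr. eapply Hcomp, response_snoc_not_res; eauto.
  - intros q. destruct (Nat.eq_dec q p) as [->|Hq].
    + rewrite upd_eq, upd_nat_eq. apply (proc_ok_invoke g es L L p (cur p)).
      * rewrite <- Hidle. apply Hprocs.
      * intros Hx. rewrite Hx in Hs. contradiction.
      * destruct (pc s); try contradiction; intros Hin; apply (entries_lt es L _ Hent) in Hin; lia.
    + rewrite upd_neq, upd_nat_neq by auto. rewrite <- (app_nil_r L).
      apply proc_ok_frame; auto.
Qed.

Lemma lin_inv_invoke_inc n k g c es L cur p s :
  lin_inv n k g c es L cur -> p < n -> pc (loc c p) = Idle -> pc s = IncRet ->
  linearized_incs s = linearized_incs (loc c p) + 1 ->
  lin_inv n k g (mkC (upd (loc c) p s) (reg c)) (es ++ [EInv p OInc])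
    (L ++ [(length es, RInc)]) (upd_nat cur p (length es)).
Proof.
  intros [Hincs Hnd Hent Hrt Hleg Hcomp Hprocs] Hp Hidle Hs Hls.
  assert (Hnres : forall q r, EInv p OInc <> ERes q r) by discriminate.
  assert (Hnew : ~ In (length es) (map fst L))
    by (intros Hin; apply (entries_lt es L _ Hent) in Hin; lia).
  constructor; cbn [loc].
  - pose proof (sum_below_upd n linearized_incs (loc c) p s Hp).
    rewrite map_app. cbn [map snd]. rewrite count_incs_snoc. lia.
  - apply NoDup_map_fst_snoc; auto.
  - apply entries_ok_snoc_entry; auto.
    + rewrite last_length. lia.
    + exists p. apply nth_error_snoc_length.
    + intros j r. apply no_response_snoc_length.
  - apply real_time_ok_snoc_entry, response_snoc_res_lt; auto.
    intros j r. apply no_response_snoc_length.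
  - rewrite map_app. apply legal_from_snoc; simpl; auto.
  - intros i j r Hr. apply in_or_app. left. eapply Hcomp, response_snoc_not_res; eauto.
  - intros q. destruct (Nat.eq_dec q p) as [->|Hq].
    + rewrite upd_eq, upd_nat_eq, Hs. apply (proc_ok_invoke g es L _ p (cur p) IncRet).
      * rewrite <- Hidle. apply Hprocs.
      * discriminate.
      * apply in_or_app. simpl. auto.
    + rewrite upd_neq, upd_nat_neq by auto. apply proc_ok_frame; auto.
      intros j r o [[= <- _]|[]] Hj. apply nth_error_lt in Hj. lia.
Qed.

Definition access_by (p : nat) (e : Event) : Prop :=
  match e with EMaxWrite q _ | EMaxRead q _ => q = p | _ => False end.

Lemma lin_inv_access n k g c es L cur p s e r reg' :
  lin_inv n k g c es L cur -> p < n -> access_by p e ->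
  before_access (pc (loc c p)) -> after_access (pc s) ->
  kind_of_pc (pc s) = kind_of_pc (pc (loc c p)) -> kind_of r = kind_of_pc (pc s) ->
  pc_linearized (pc s) (L ++ [(cur p, r)]) (cur p) ->
  linearized_incs s = linearized_incs (loc c p) + count_incs [r] ->
  (match r with
   | RInc => True
   | RRead x => INR (count_incs (map snd L)) / k <= x <= k * INR (count_incs (map snd L))
   end)%R ->
  lin_inv n k g (mkC (upd (loc c) p s) reg') (es ++ [e]) (L ++ [(cur p, r)]) cur.
Proof.
  intros [Hincs Hnd Hent Hrt Hleg Hcomp Hprocs] Hp He Hx Hx' Hkind Hkr Hlin Hls Hr.
  assert (Hnres : forall q r, e <> ERes q r) by (intros q r' ->; contradiction).
  assert (Hown : owner e = p) by (destruct e; try contradiction; auto).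
  assert (Hhl : hl_of p e = false) by (destruct e; try contradiction; auto).
  assert (Hcoste : event_cost g p e = g)
    by (destruct e; try contradiction; simpl in *; subst; rewrite Nat.eqb_refl; auto).
  assert (Hxi : pc (loc c p) <> Idle) by (intros Hi; rewrite Hi in Hx; contradiction).
  destruct (Hprocs p) as [Hpend _].
  destruct (Hpend Hxi) as (Hcq & Hinv & Hno & Hnl).
  assert (Hnotl : ~ In (cur p) (map fst L)) by (destruct (pc (loc c p)); try contradiction; auto).
  assert (Hnresp : forall j r', ~ response (es ++ [e]) (cur p) j r').
  { intros j r'. apply pending_no_response with p (kind_of_pc (pc (loc c p))).
    - rewrite nth_error_app1; auto.
    - apply no_hl_after_snoc; auto. }
  constructor; cbn [loc].
  - pose proof (sum_below_upd n linearized_incs (loc c) p s Hp).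
    rewrite map_app. cbn [map snd]. rewrite count_incs_snoc. simpl in Hls. destruct r; lia.
  - apply NoDup_map_fst_snoc; auto.
  - apply entries_ok_snoc_entry; auto.
    + rewrite last_length. lia.
    + exists p. rewrite nth_error_app1, Hkr, Hkind; auto.
  - apply real_time_ok_snoc_entry, response_snoc_res_lt; auto.
  - rewrite map_app. apply legal_from_snoc; simpl; auto.
  - intros i j r' Hr'. apply in_or_app. left. eapply Hcomp, response_snoc_not_res; eauto.
  - intros q. destruct (Nat.eq_dec q p) as [->|Hq].
    + rewrite upd_eq. eapply proc_ok_access; eauto.
    + rewrite upd_neq by auto. apply proc_ok_frame; auto; [congruence|].
      intros j r' o [[= <- _]|[]] Hj.
      rewrite Hinv in Hj. congruence.
Qed.

Lemma lin_inv_return n k g c es L cur p s :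
  lin_inv n k g c es L cur -> after_access (pc (loc c p)) -> pc s = Idle ->
  linearized_incs s = linearized_incs (loc c p) ->
  lin_inv n k g (mkC (upd (loc c) p s) (reg c))
    (es ++ [ERes p (response_of_pc (pc (loc c p)))]) L cur.
Proof.
  intros [Hincs Hnd Hent Hrt Hleg Hcomp Hprocs] Hx Hs Hls.
  set (r := response_of_pc (pc (loc c p))).
  assert (Hxi : pc (loc c p) <> Idle) by (intros Hi; rewrite Hi in Hx; contradiction).
  destruct (Hprocs p) as [Hpend _].
  destruct (Hpend Hxi) as (_ & Hinv & Hno & Hnl).
  assert (Hin : In (cur p, r) L) by (subst r; destruct (pc (loc c p)); try contradiction; auto).
  constructor; cbn [loc].
  - rewrite Hincs. symmetry. apply sum_below_upd_same. auto.
  - auto.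
  - eapply entries_ok_snoc_res; eauto.
  - apply real_time_ok_snoc_res; auto.
  - auto.
  - intros i j r' Hr'. destruct (response_bounds _ _ _ _ Hr') as [_ Hj].
    rewrite last_length in Hj. destruct (Nat.eq_dec j (length es)) as [->|].
    + destruct (response_snoc_last _ _ _ _ _ _ _ Hinv Hno Hr') as [-> ->]. auto.
    + eapply Hcomp, response_snoc_inv; eauto. lia.
  - intros q. destruct (Nat.eq_dec q p) as [->|Hq].
    + rewrite upd_eq, Hs. apply proc_ok_return; auto.
    + rewrite upd_neq by auto. rewrite <- (app_nil_r L).
      apply proc_ok_frame; auto.
Qed.

Lemma within_factor (k a V : R) : (0 < k)%R -> (a <= V <= k * k * a)%R ->
  (V / k <= k * a <= k * V)%R.
Proof.
  intros Hk [Hlo Hhi]. split.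
  - apply Rmult_le_reg_r with k; auto. unfold Rdiv. rewrite Rmult_assoc, Rinv_l by lra. nra.
  - apply Rmult_le_compat_l; lra.
Qed.

(* If the register holds r >= 0, some process has written r (so at least 2^r Increments are
   linearized) and no process has written more than r (so at most n 2^(r+1) are). *)
Lemma read_value_accurate n k c es : count_inv n c es -> (sqrt (2 * INR n) <= k)%R ->
  let V := INR (sum_below n (fun q => linearized_incs (loc c q))) in
  let x := if Z.leb 0 (reg c) then (k * 2 ^ Z.to_nat (reg c))%R else 0%R in
  (V / k <= x <= k * V)%R.
Proof.
  intros [Hloc Hle Hatt _ _] Hk V x. subst V x.
  destruct (Z.leb_spec 0 (reg c)) as [Hr|Hr].
  - set (r := Z.to_nat (reg c)).
    destruct (Hatt Hr) as [w [Hw Hwr]].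
    assert (Hlo : 2 ^ r <= sum_below n (fun q => linearized_incs (loc c q))).
    { eapply Nat.le_trans; [apply (linearized_incs_ge _ r (Hloc w)); lia|].
      apply (le_sum_below n (fun q => linearized_incs (loc c q)) w Hw). }
    assert (Hhi : sum_below n (fun q => linearized_incs (loc c q)) <= n * 2 ^ S r).
    { apply sum_below_le. intros q Hq. eapply Nat.le_trans; [apply linearized_incs_le, Hloc|].
      apply Nat.pow_le_mono_r; [lia|]. specialize (Hle q). lia. }
    apply within_factor.
    + assert (0 < INR n)%R by (apply lt_0_INR; lia).
      assert (0 < sqrt (2 * INR n))%R by (apply sqrt_lt_R0; lra). lra.
    + set (V := sum_below _ _) in *.
      assert (Hkk : (2 * INR n <= k * k)%R).
      { assert (0 <= 2 * INR n)%R by (pose proof (pos_INR n); lra).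
        rewrite <- (sqrt_sqrt (2 * INR n)) by auto. apply Rmult_le_compat; auto using sqrt_pos. }
      apply le_INR in Hlo, Hhi. rewrite pow_INR in Hlo.
      rewrite mult_INR, pow_INR in Hhi. simpl (INR 2) in *. replace (1 + 1)%R with 2%R in * by lra.
      assert (0 < 2 ^ r)%R by (apply pow_lt; lra). simpl in Hhi. nra.
  - assert (HV : sum_below n (fun q => linearized_incs (loc c q)) = 0).
    { apply sum_below_zero. intros q _. apply linearized_incs_nextVal_0; auto.
      specialize (Hle q). lia. }
    rewrite HV. simpl. unfold Rdiv. lra.
Qed.

Lemma lin_inv_step n k g c es L cur a :
  count_inv n c es -> lin_inv n k g c es L cur -> fst a < n -> (sqrt (2 * INR n) <= k)%R ->
  exists L' cur', lin_inv n k g (fst (step k c a)) (es ++ [snd (step k c a)]) L' cur'.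
Proof.
  intros Ic I Hp Hk. destruct a as [p o]; simpl in Hp.
  destruct (loc c p) as [lc thr nv x] eqn:Hs.
  assert (Hl := ci_local _ _ _ Ic p). rewrite Hs in Hl. unfold local_ok in Hl; simpl in Hl.
  unfold step. rewrite Hs. cbn [pc lcounter threshold nextVal].
  destruct x; [destruct o; [destruct (Nat.eqb_spec (S lc) thr)|]|..]; cbn [fst snd]; eexists _, _.
  - apply (lin_inv_invoke_pending _ _ _ _ _ _ _ _ (mkL (S lc) thr nv (IncWrite nv)) I);
      rewrite ?Hs; unfold linearized_incs, invoked_incs; simpl; auto; lia.
  - apply (lin_inv_invoke_inc _ _ _ _ _ _ _ _ (mkL (S lc) thr nv IncRet) I);
      rewrite ?Hs; unfold linearized_incs, invoked_incs; simpl; auto; lia.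
  - apply (lin_inv_invoke_pending _ _ _ _ _ _ _ _ (mkL lc thr nv ReadRead) I);
      rewrite ?Hs; unfold linearized_incs, invoked_incs; simpl; auto; lia.
  - apply (lin_inv_access _ _ _ _ _ _ _ _ _ _ RInc _ I); rewrite ?Hs; simpl; auto.
    + apply in_or_app. simpl. auto.
    + unfold linearized_incs, invoked_incs; simpl. destruct Hl as [-> [-> ->]].
      destruct nv; simpl; [lia|]. pose proof (one_le_pow2 nv). lia.
  - replace (ERes p RInc) with (ERes p (response_of_pc (pc (loc c p)))) by (rewrite Hs; auto).
    apply (lin_inv_return _ _ _ _ _ _ _ _ _ I); rewrite ?Hs; simpl; auto.
  - eapply (lin_inv_access _ _ _ _ _ _ _ _ _ _ (RRead _) _ I); rewrite ?Hs; simpl; auto.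
    + apply in_or_app. simpl. auto.
    + rewrite (li_incs _ _ _ _ _ _ _ I). apply (read_value_accurate _ _ _ _ Ic Hk).
  - replace (ERes p (RRead x)) with (ERes p (response_of_pc (pc (loc c p)))) by (rewrite Hs; auto).
    apply (lin_inv_return _ _ _ _ _ _ _ _ _ I); rewrite ?Hs; simpl; auto.
Qed.

Lemma invariants_reachable n k g sched : valid_sched n sched -> (sqrt (2 * INR n) <= k)%R ->
  let c := fst (run_from k init_config sched) in
  count_inv n c (events k sched) /\ exists L cur, lin_inv n k g c (events k sched) L cur.
Proof.
  intros Hv Hk. apply (invariant_reachable n k
    (fun c es => count_inv n c es /\ exists L cur, lin_inv n k g c es L cur)); auto.
  - split; [apply count_inv_init|]. exists [], (fun _ => 0). apply lin_inv_init.
  - intros c es a [Ic (L & cur & I)] Ha. split; [apply count_inv_step; auto|].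
    eapply lin_inv_step; eauto.
Qed.

Lemma maxwrite_le_log2_up n k m sched p v : valid_sched n sched ->
  num_incs (events k sched) <= m -> In (EMaxWrite p v) (events k sched) -> v <= Nat.log2_up m.
Proof.
  intros Hv Hm Hin.
  pose proof (ci_maxwrite _ _ _ (count_inv_reachable n k sched Hv) p v Hin) as Hpow.
  pose proof (one_le_pow2 v).
  assert (v <= Nat.log2 m) by (apply Nat.log2_le_pow2; lia).
  pose proof (Nat.le_log2_log2_up m). lia.
Qed.

Lemma events_linearizable n k sched : valid_sched n sched -> (sqrt (2 * INR n) <= k)%R ->
  linearizable k (events k sched).
Proof.
  intros Hv Hk. destruct (invariants_reachable n k 0 sched Hv Hk) as [_ (L & cur & I)].
  destruct I as [_ Hnd Hent Hrt Hleg Hcomp _].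
  exists L. repeat split; auto.
  intros i r Hin. destruct (Hent i r Hin) as (_ & [p Hp] & Hr). eauto.
Qed.

Lemma op_cost_le n k g sched i p o : valid_sched n sched -> (sqrt (2 * INR n) <= k)%R ->
  nth_error (events k sched) i = Some (EInv p o) -> op_cost g (events k sched) i p <= 2 + g.
Proof.
  intros Hv Hk Hi. destruct (invariants_reachable n k g sched Hv Hk) as [_ (L & cur & I)].
  destruct (li_procs _ _ _ _ _ _ _ I p) as [_ Hcost].
  unfold op_cost. destruct (Hcost i o Hi) as [[_ Hc]|(_ & _ & Hc)]; lia.
Qed.

Definition steps_to_response (x : PC) : nat :=
  match x with Idle => 3 | IncWrite _ | ReadRead => 2 | IncRet | ReadRet _ => 1 end.

Lemma step_progress k c q o p :
  is_res_of p (snd (step k c (q, o))) = true \/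
  (steps_to_response (pc (loc (fst (step k c (q, o))) p)) <= steps_to_response (pc (loc c p)) /\
   (q = p ->
    steps_to_response (pc (loc (fst (step k c (q, o))) p)) < steps_to_response (pc (loc c p)))).
Proof.
  unfold step. destruct (loc c q) as [lc thr nv x] eqn:Hs. cbv zeta.
  cbn [pc lcounter threshold nextVal].
  destruct x; [destruct o; [destruct (Nat.eqb (S lc) thr)|]|..];
    cbn [fst snd loc pc lcounter threshold nextVal];
    (destruct (Nat.eq_dec q p) as [->|Hq];
     [rewrite ?upd_eq, Hs; simpl; try (left; apply Nat.eqb_refl); right; split; intros; lia
     | rewrite upd_neq by auto; right; split; intros; [lia | congruence]]).
Qed.

Lemma prefix_S (sigma : nat -> nat * OpKind) t : prefix sigma (S t) = prefix sigma t ++ [sigma t].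
Proof. unfold prefix. rewrite seq_S, map_app. reflexivity. Qed.

Section WaitFreedom.

Variable k : R.
Variable sigma : nat -> nat * OpKind.
Variable p : nat.
Hypothesis scheduled_infinitely : forall t, exists t', t <= t' /\ fst (sigma t') = p.

Let config_at t := fst (run_from k init_config (prefix sigma t)).
Let responses_at t := length (filter (is_res_of p) (events k (prefix sigma t))).
Let potential_at t := steps_to_response (pc (loc (config_at t) p)).

Lemma step_at t : responses_at t < responses_at (S t) \/
  (responses_at (S t) = responses_at t /\ potential_at (S t) <= potential_at t /\
   (fst (sigma t) = p -> potential_at (S t) < potential_at t)).
Proof.
  unfold responses_at, potential_at, config_at, events.
  rewrite prefix_S, run_from_snoc. cbn [fst snd]. rewrite filter_app, length_app.
  destruct (sigma t) as [q o]. cbn [fst].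
  destruct (step_progress k (fst (run_from k init_config (prefix sigma t))) q o p) as [H|H];
    cbn [filter]; rewrite ?H; simpl; [lia|].
  destruct (is_res_of _ _); simpl; [lia|]. right. rewrite Nat.add_0_r. auto.
Qed.

Lemma responses_mono t d : responses_at t <= responses_at (t + d).
Proof.
  induction d; [rewrite Nat.add_0_r; lia|]. rewrite Nat.add_succ_r.
  destruct (step_at (t + d)) as [|[-> _]]; lia.
Qed.

Lemma potential_nonincreasing t d :
  responses_at t < responses_at (t + d) \/ potential_at (t + d) <= potential_at t.
Proof.
  induction d; [rewrite Nat.add_0_r; lia|]. rewrite Nat.add_succ_r.
  pose proof (responses_mono t d). destruct (step_at (t + d)); lia.
Qed.

Lemma potential_drops t0 : exists t, responses_at t0 < responses_at t \/
  (responses_at t0 <= responses_at t /\ potential_at t < potential_at t0).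
Proof.
  destruct (scheduled_infinitely t0) as [t' [Ht' Hs]].
  replace t' with (t0 + (t' - t0)) in Hs by lia. set (d := t' - t0) in *.
  pose proof (responses_mono t0 d).
  destruct (potential_nonincreasing t0 d); [eauto|].
  exists (S (t0 + d)). destruct (step_at (t0 + d)) as [|(Heq & _ & Hlt)]; [left; lia|].
  specialize (Hlt Hs). right. lia.
Qed.

Lemma eventually_responds t0 : exists t, responses_at t0 < responses_at t.
Proof.
  remember (potential_at t0) as m eqn:Hm. assert (Hle : potential_at t0 <= m) by lia. clear Hm.
  revert t0 Hle. induction m as [|m IH]; intros t0 Hle;
    destruct (potential_drops t0) as [t [Ht|[Ht Hpot]]]; eauto; [lia|].
  destruct (IH t) as [t1 Ht1]; [lia|]. exists t1. lia.
Qed.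

Lemma wait_free N : exists t, N <= responses_at t.
Proof.
  induction N as [|N [t0 Ht0]]; [exists 0; lia|].
  destruct (eventually_responds t0) as [t Ht]. exists t. lia.
Qed.

End WaitFreedom.

Lemma log2_log2_up_le m : 4 <= m ->
  1 <= Nat.log2 (Nat.log2 m) /\ Nat.log2 (Nat.log2_up m) <= 2 * Nat.log2 (Nat.log2 m).
Proof.
  intros Hm.
  assert (Ha : 2 <= Nat.log2 m) by (apply Nat.log2_le_pow2; simpl; lia).
  assert (Hb : 1 <= Nat.log2 (Nat.log2 m)) by (apply Nat.log2_le_pow2; simpl; lia).
  split; auto.
  assert (Nat.log2_up m <= S (Nat.log2 m)) by apply Nat.le_log2_up_succ_log2.
  eapply Nat.le_trans; [apply Nat.log2_le_mono with (b := 2 * Nat.log2 m); lia|].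
  rewrite Nat.log2_double by lia. lia.
Qed.

Theorem mainTheorem3 :
  (forall (n m : nat) (k : R), 1 <= m -> (sqrt (2 * INR n) <= k)%R ->
     (forall sched, valid_sched n sched -> num_incs (events k sched) <= m ->
        forall p v, In (EMaxWrite p v) (events k sched) -> v <= Nat.log2_up m) /\
     (forall sched, valid_sched n sched -> num_incs (events k sched) <= m ->
        linearizable k (events k sched)) /\
     (forall sigma : nat -> nat * OpKind,
        (forall t, fst (sigma t) < n) ->
        (forall t, num_incs (events k (prefix sigma t)) <= m) ->
        forall p, (forall t, exists t', t <= t' /\ fst (sigma t') = p) ->
        forall N, exists t,
          N <= length (filter (is_res_of p) (events k (prefix sigma t))))) /\
  (forall c : nat, exists C : nat,
     forall (n m : nat) (k : R) (g : nat) sched,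
       4 <= m -> (sqrt (2 * INR n) <= k)%R ->
       g <= c * Nat.log2 (Nat.log2_up m) ->
       valid_sched n sched -> num_incs (events k sched) <= m ->
       forall i p o, nth_error (events k sched) i = Some (EInv p o) ->
         op_cost g (events k sched) i p <= C * Nat.log2 (Nat.log2 m)).
Proof.
  split.
  - intros n m k _ Hk. split; [|split].
    + intros sched Hv Hm p v. apply maxwrite_le_log2_up with n; auto.
    + intros sched Hv _. apply events_linearizable with n; auto.
    + intros sigma _ _ p Hinf N. apply (wait_free k sigma p Hinf N).
  - intros c. exists (2 * c + 2). intros n m k g sched Hm Hk Hg Hv _ i p o Hi.
    pose proof (op_cost_le n k g sched i p o Hv Hk Hi).
    destruct (log2_log2_up_le m Hm). nia.
Qed.
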